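(* Let $\mathcal C$ be an uncountable algebraically closed field of characteristic zero and $p\ge2$ an integer. Let $X\subset GL_n(\mathcal C)$ be the Zariski closed set of all $v$ satisfying: (1) $(v^m)^{(p)}=(v^{(p)})^m$ for all $m\ge0$, and (2) $(v^m)^{(p)}(v^{-m})^{(p)}=1$ for all $m\ge0$ (equalities in $\mathfrak{gl}_n(\mathcal C)$). Then $X$ has exactly one irreducible component passing through $1$, and that component is the group $T$ of diagonal matrices in $GL_n(\mathcal C)$.
   Context: For a matrix $v=(v_{ij})$, $v^{(p)}=(v_{ij}^p)$ denotes the entrywise $p$-th power. *)

From HB Require Import structures.
From mathcomp Require Import all_boot all_order all_algebra.
From mathcomp Require Import mpoly.
Set Implicit Arguments. Unset Strict Implicit. Unset Printing Implicit Defensive.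
Import GRing.Theory.
Local Open Scope ring_scope.

Section Zariski.
Variables (C : fieldType) (n : nat).

Definition inGL (v : 'M[C]_n) : Prop := v \in unitmx.

Definition mx_eval (f : {mpoly C[n * n]}) (v : 'M[C]_n) : C :=
  f.@[fun k => mxvec v 0 k].

(* Zariski closed subsets of GL_n(C): intersections of GL_n with common zero
   loci of families of polynomials in the matrix entries.  (Zariski closed
   sets of the affine variety GL_n are exactly these, since det is invertible
   on GL_n.) *)
Definition zclosed (A : 'M[C]_n -> Prop) : Prop :=
  exists S : {mpoly C[n * n]} -> Prop,
    forall v, A v <-> (inGL v /\ forall f, S f -> mx_eval f v = 0).

Definition zirreducible (Y : 'M[C]_n -> Prop) : Prop :=
  (forall v, Y v -> inGL v) /\ (exists v, Y v) /\
  forall F1 F2, zclosed F1 -> zclosed F2 ->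
    (forall v, Y v -> F1 v \/ F2 v) ->
    (forall v, Y v -> F1 v) \/ (forall v, Y v -> F2 v).

Definition irr_component (X Y : 'M[C]_n -> Prop) : Prop :=
  zirreducible Y /\ (forall v, Y v -> X v) /\
  forall Z, zirreducible Z -> (forall v, Z v -> X v) ->
    (forall v, Y v -> Z v) -> forall v, Z v -> Y v.

End Zariski.

Definition epow (C : ringType) (n p : nat) (v : 'M[C]_n) : 'M[C]_n :=
  map_mx (fun x => x ^+ p) v.

Definition Xset (C : fieldType) (n p : nat) (v : 'M[C]_n) : Prop :=
  v \in unitmx /\
  forall m : nat,
    epow p (v ^+ m) = (epow p v) ^+ m /\
    epow p (v ^+ m) *m epow p (invmx (v ^+ m)) = 1%:M.

Definition diagT (C : fieldType) (n : nat) (v : 'M[C]_n) : Prop :=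
  v \in unitmx /\ forall i j : 'I_n, i != j -> v i j = 0.

Definition uncountable (T : Type) : Prop :=
  forall f : nat -> T, exists x : T, forall k, f k <> x.

From HB Require Import structures.
From mathcomp Require Import all_boot all_order all_algebra.
From mathcomp Require Import mpoly.
From mathcomp Require Import ring.
From Stdlib Require Import Classical FunctionalExtensionality PropExtensionality.
Set Implicit Arguments. Unset Strict Implicit. Unset Printing Implicit Defensive.
Import GRing.Theory.
Local Open Scope ring_scope.

(* T is contained in X and is irreducible: on a line through two diagonal matrices
   a polynomial in the entries becomes a one-variable polynomial.  The point is that
   every irreducible Z in X through 1 lies in T.  Let J be the ideal of functions on Z
   generated by the off-diagonal entries v_ij.  Comparing the (i, j) entries of
   (v^2)^(p) and (v^(p))^2 gives u_ij v_ij^p in J^(p+1), where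
   u_ij = (v_ii + v_jj)^p - v_ii^p - v_jj^p and u_ij(1) = 2^p - 2 <> 0.  By pigeonhole
   every monomial of degree K = #{i <> j} (p - 1) + 1 in the v_ij contains some v_ij^p,
   so U = prod u_ij satisfies U J^K in J^(K+1), which lies in m J^K for the maximal
   ideal m of 1.  As the ideal of Z is prime and U(1) <> 0, a determinant-trick
   (Nakayama) induction kills J^K on Z, hence every v_ij vanishes on Z. *)

Section PolynomialFunctions.
Variables (C : fieldType) (n : nat).
Implicit Types (f g : 'M[C]_n -> C) (v : 'M[C]_n).

Definition polyfun f : Prop := exists q : {mpoly C[n * n]}, forall v, f v = mx_eval q v.

Lemma polyfun_ext f g : (forall v, f v = g v) -> polyfun f -> polyfun g.
Proof. by move=> fg [q hq]; exists q => v; rewrite -fg. Qed.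

Lemma polyfunC (c : C) : polyfun (fun _ => c).
Proof. by exists c%:MP => v; rewrite /mx_eval mevalC. Qed.

Lemma polyfun_entry (i j : 'I_n) : polyfun (fun v => v i j).
Proof. by exists 'X_(mxvec_index i j) => v; rewrite /mx_eval mevalXU mxvecE. Qed.

Lemma polyfunD f g : polyfun f -> polyfun g -> polyfun (fun v => f v + g v).
Proof. by move=> [q hq] [r hr]; exists (q + r) => v; rewrite /mx_eval mevalD hq hr. Qed.

Lemma polyfunN f : polyfun f -> polyfun (fun v => - f v).
Proof. by move=> [q hq]; exists (- q) => v; rewrite /mx_eval mevalN hq. Qed.

Lemma polyfunB f g : polyfun f -> polyfun g -> polyfun (fun v => f v - g v).
Proof. by move=> pf pg; apply: polyfunD pf (polyfunN pg). Qed.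

Lemma polyfunM f g : polyfun f -> polyfun g -> polyfun (fun v => f v * g v).
Proof. by move=> [q hq] [r hr]; exists (q * r) => v; rewrite /mx_eval mevalM hq hr. Qed.

Lemma polyfunX f k : polyfun f -> polyfun (fun v => f v ^+ k).
Proof.
move=> pf; elim: k => [|k IH]; first exact: polyfun_ext (polyfunC 1).
by apply: polyfun_ext (polyfunM pf IH) => v; rewrite exprS.
Qed.

Lemma polyfun_sum (I : Type) (r : seq I) (P : pred I) (F : I -> 'M[C]_n -> C) :
  (forall i, P i -> polyfun (F i)) -> polyfun (fun v => \sum_(i <- r | P i) F i v).
Proof.
move=> pF; elim: r => [|i r IH]; first by apply: polyfun_ext (polyfunC 0) => v; rewrite big_nil.
case Pi: (P i); last by apply: polyfun_ext IH => v; rewrite big_cons Pi.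
by apply: polyfun_ext (polyfunD (pF i Pi) IH) => v; rewrite big_cons Pi.
Qed.

Lemma polyfun_prod (I : Type) (r : seq I) (P : pred I) (F : I -> 'M[C]_n -> C) :
  (forall i, P i -> polyfun (F i)) -> polyfun (fun v => \prod_(i <- r | P i) F i v).
Proof.
move=> pF; elim: r => [|i r IH]; first by apply: polyfun_ext (polyfunC 1) => v; rewrite big_nil.
case Pi: (P i); last by apply: polyfun_ext IH => v; rewrite big_cons Pi.
by apply: polyfun_ext (polyfunM (pF i Pi) IH) => v; rewrite big_cons Pi.
Qed.

Definition polymx d e (A : 'M[C]_n -> 'M[C]_(d, e)) : Prop :=
  forall i j, polyfun (fun v => A v i j).

Lemma polymx_id : polymx id.
Proof. exact: polyfun_entry. Qed.

Lemma polymx_cst d e (B : 'M[C]_(d, e)) : polymx (fun _ => B).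
Proof. by move=> i j; apply: polyfunC. Qed.

Lemma polymxB d e (A B : 'M[C]_n -> 'M[C]_(d, e)) :
  polymx A -> polymx B -> polymx (fun v => A v - B v).
Proof.
by move=> pA pB i j; apply: polyfun_ext (polyfunB (pA i j) (pB i j)) => v; rewrite !mxE.
Qed.

Lemma polymxZ d e (c : 'M[C]_n -> C) (A : 'M[C]_n -> 'M[C]_(d, e)) :
  polyfun c -> polymx A -> polymx (fun v => c v *: A v).
Proof. by move=> pc pA i j; apply: polyfun_ext (polyfunM pc (pA i j)) => v; rewrite mxE. Qed.

Lemma polymxM d e k (A : 'M[C]_n -> 'M[C]_(d, e)) (B : 'M[C]_n -> 'M[C]_(e, k)) :
  polymx A -> polymx B -> polymx (fun v => A v *m B v).
Proof.
move=> pA pB i j; apply: polyfun_ext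
  (@polyfun_sum _ (index_enum 'I_e) predT (fun l v => A v i l * B v l j)
     (fun l _ => polyfunM (pA i l) (pB l j))).
by move=> v; rewrite mxE.
Qed.

Lemma polymxX d (A : 'M[C]_n -> 'M[C]_d) m : polymx A -> polymx (fun v => A v ^+ m).
Proof.
move=> pA; elim: m => [|m IH]; first exact: polymx_cst.
by move=> i j; apply: polyfun_ext (polymxM pA IH i j) => v; rewrite exprS mulmxE.
Qed.

Lemma polymx_epow d p (A : 'M[C]_n -> 'M[C]_d) : polymx A -> polymx (fun v => epow p (A v)).
Proof. by move=> pA i j; apply: polyfun_ext (polyfunX p (pA i j)) => v; rewrite mxE. Qed.

Lemma polyfun_det d (A : 'M[C]_n -> 'M[C]_d) : polymx A -> polyfun (fun v => \det (A v)).
Proof.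
move=> pA; apply: polyfun_sum => s _; apply: polyfunM; first exact: polyfunC.
by apply: polyfun_prod => i _; apply: pA.
Qed.

Lemma polymx_adj d (A : 'M[C]_n -> 'M[C]_d) : polymx A -> polymx (fun v => \adj (A v)).
Proof.
move=> pA i j; have pminor : polymx (fun v => row' j (col' i (A v))).
  by move=> k l; apply: polyfun_ext (pA _ _) => v; rewrite !mxE.
by apply: polyfun_ext (polyfunM (polyfunC _) (polyfun_det pminor)) => v; rewrite mxE.
Qed.

End PolynomialFunctions.

Lemma zclosed_zeros (C : fieldType) (n : nat) (A : 'M[C]_n -> Prop) (K : Type) (d e : nat)
    (F : K -> 'M[C]_n -> 'M[C]_(d, e)) :
  (forall k, polymx (F k)) -> (forall v, A v <-> inGL v /\ forall k, F k v = 0) ->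
  zclosed A.
Proof.
move=> pF AE; exists (fun q => exists k i j, forall v, F k v i j = mx_eval q v) => v.
rewrite AE; split=> -[vGL Fv]; split=> //.
  by move=> q [k [i [j <-]]]; rewrite Fv mxE.
move=> k; apply/matrixP=> i j; have [q qE] := pF k i j.
by rewrite mxE qE; apply: Fv; exists k, i, j.
Qed.

Lemma epowZ (C : comNzRingType) (n p : nat) (c : C) (A : 'M[C]_n) :
  epow p (c *: A) = c ^+ p *: epow p A.
Proof. by apply/matrixP => i j; rewrite !mxE exprMn. Qed.

Lemma epow_mul_invmx (C : fieldType) (n p : nat) (V : 'M[C]_n) : V \in unitmx ->
  (epow p V *m epow p (invmx V) == 1%:M) =
  (epow p V *m epow p (\adj V) == \det V ^+ p *: 1%:M).
Proof.
move=> vU; have detV : \det V != 0 by rewrite -unitfE -unitmxE.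
rewrite /invmx vU epowZ -scalemxAr; apply/eqP/eqP => [<-|->].
  by rewrite scalerA -exprMn mulfV // expr1n scale1r.
by rewrite scalerA -exprMn mulVf // expr1n scale1r.
Qed.

Lemma unitmxX (C : comUnitRingType) (n : nat) (v : 'M[C]_n) m :
  v \in unitmx -> v ^+ m \in unitmx.
Proof.
move=> vU; elim: m => [|m IH]; first by rewrite expr0 unitmx1.
by rewrite exprS -mulmxE unitmx_mul vU IH.
Qed.

Lemma Xset_zclosed (C : fieldType) (n p : nat) : zclosed (Xset (C := C) (n := n) p).
Proof.
pose F (k : nat * bool) (v : 'M[C]_n) := let: (m, b) := k in
  if b then epow p (v ^+ m) - epow p v ^+ m
  else epow p (v ^+ m) *m epow p (\adj (v ^+ m)) - \det (v ^+ m) ^+ p *: 1%:M.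
apply: (zclosed_zeros (F := F)).
  have pX m : polymx (fun v : 'M[C]_n => v ^+ m) by apply/polymxX/polymx_id.
  case=> m []; apply: polymxB.
  - exact: polymx_epow (pX m).
  - exact/polymxX/polymx_epow/polymx_id.
  - exact: polymxM (polymx_epow _ (pX m)) (polymx_epow _ (polymx_adj (pX m))).
  - exact: polymxZ (polyfunX _ (polyfun_det (pX m))) (polymx_cst _ _).
move=> v; split=> -[vU Xv]; split=> //.
  case=> m []; rewrite /F; first by rewrite (Xv m).1 subrr.
  by apply/eqP; rewrite subr_eq0 -epow_mul_invmx ?unitmxX //; apply/eqP; apply: (Xv m).2.
move=> m; split; first by apply/eqP; rewrite -subr_eq0; apply/eqP; apply: (Xv (m, true)).
apply/eqP; rewrite epow_mul_invmx ?unitmxX // -subr_eq0; apply/eqP; apply: (Xv (m, false)).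
Qed.

Section DiagonalMatrices.
Variables (C : comNzRingType) (n p : nat).
Hypothesis p_gt0 : (0 < p)%N.

Lemma epow_diag_mx (d : 'rV[C]_n) : epow p (diag_mx d) = diag_mx (\row_i d 0 i ^+ p).
Proof.
apply/matrixP => i j; rewrite !mxE; case: (i == j) => /=; first by rewrite !mulr1n.
by rewrite !mulr0n expr0n gtn_eqF.
Qed.

Lemma epow1 : epow p (1%:M : 'M[C]_n) = 1%:M.
Proof.
rewrite -diag_const_mx epow_diag_mx; congr diag_mx.
by apply/rowP => i; rewrite !mxE expr1n.
Qed.

Lemma epow_diag_mul (d : 'rV[C]_n) (B : 'M[C]_n) :
  epow p (diag_mx d *m B) = epow p (diag_mx d) *m epow p B.
Proof. by rewrite epow_diag_mx !mul_diag_mx; apply/matrixP => i j; rewrite !mxE exprMn. Qed.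

Lemma diag_mxX (d : 'rV[C]_n) k : diag_mx d ^+ k = diag_mx (\row_i d 0 i ^+ k).
Proof.
elim: k => [|k IH]; first by apply/matrixP => i j; rewrite expr0 !mxE expr0.
rewrite exprS IH -mulmxE mulmx_diag; congr diag_mx.
by apply/rowP => i; rewrite !mxE exprS.
Qed.

End DiagonalMatrices.

Lemma diagT_diag_mx (C : fieldType) (n : nat) (v : 'M[C]_n) :
  diagT v -> v = diag_mx (\row_i v i i).
Proof.
move=> [_ vdiag]; apply/matrixP => i j; rewrite !mxE.
by have [<-|ij] := eqVneq i j; [rewrite mulr1n | rewrite vdiag // mulr0n].
Qed.

Lemma diagT1 (C : fieldType) (n : nat) : diagT (1%:M : 'M[C]_n).
Proof. by split=> [|i j /negbTE ij]; rewrite ?unitmx1 // mxE ij. Qed.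

Lemma diagT_Xset (C : fieldType) (n p : nat) (v : 'M[C]_n) : (0 < p)%N -> diagT v -> Xset p v.
Proof.
move=> p_gt0 Tv; have vU := Tv.1; rewrite (diagT_diag_mx Tv) in vU *.
split=> // m; rewrite diag_mxX; split.
  by rewrite !epow_diag_mx // diag_mxX; congr diag_mx; apply/rowP => i; rewrite !mxE -!exprM mulnC.
by rewrite -epow_diag_mul // mulmxV ?epow1 // -diag_mxX unitmxX.
Qed.

Lemma natr_inj_pchar0 (C : fieldType) : [pchar C] =i pred0 -> injective (fun k : nat => k%:R : C).
Proof.
move=> /pcharf0P C0 a b; wlog ab : a b / (a <= b)%N => [hw|] e.
  by have [ab|/ltnW ba] := leqP a b; [exact: hw ab e | exact/esym/(hw _ _ ba (esym e))].
by apply/eqP; rewrite eqn_leq ab -subn_eq0 -C0 natrB // e subrr eqxx.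
Qed.

Lemma poly_eq0_pchar0 (C : fieldType) (q : {poly C}) :
  [pchar C] =i pred0 -> (forall s, q.[s] = 0) -> q = 0.
Proof.
move=> C0 q0; apply: (@roots_geq_poly_eq0 _ q [seq i%:R | i <- iota 0 (size q)]).
- by apply/allP => s _; apply/eqP.
- by rewrite map_inj_uniq ?iota_uniq //; apply: natr_inj_pchar0.
- by rewrite size_map size_iota.
Qed.

Lemma polyfun_line (C : fieldType) (n : nat) (f : 'M[C]_n -> C) (A B : 'M[C]_n) :
  polyfun f -> exists q : {poly C}, forall s, f (A + s *: B) = q.[s].
Proof.
move=> [q0 q0E].
exists (\sum_(m <- msupp q0) (q0@_m)%:P * \prod_i ((mxvec A 0 i)%:P + mxvec B 0 i *: 'X) ^+ (m i)).
move=> s; rewrite q0E /mx_eval mevalE horner_sum; apply: eq_bigr => m _.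
rewrite hornerM hornerC horner_prod; congr (_ * _); apply: eq_bigr => i _.
by rewrite horner_exp hornerD hornerC hornerZ hornerX linearD linearZ /= !mxE mulrC.
Qed.

Lemma zclosed_separating (C : fieldType) (n : nat) (F : 'M[C]_n -> Prop) (t : 'M[C]_n) :
  zclosed F -> inGL t -> ~ F t ->
  exists2 f, polyfun f & (forall v, F v -> f v = 0) /\ f t <> 0.
Proof.
move=> [S FE] tGL Ft; apply: NNPP => noq; apply/Ft/FE; split=> // q Sq.
apply: NNPP => qt; apply: noq; exists (mx_eval q); first by exists q.
by split=> // v /FE[_]; apply.
Qed.

Lemma diagT_zirreducible (C : fieldType) (n : nat) :
  [pchar C] =i pred0 -> zirreducible (@diagT C n).
Proof.
move=> C0; split; first by move=> v [].
split; first by exists 1%:M; apply: diagT1.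
move=> F1 F2 F1c F2c cover.
case: (classic (forall v, diagT v -> F1 v)) => [|notF1]; [by left | right].
apply: NNPP => notF2.
have [t1 /(@imply_to_and (diagT _)) [T1 nF1]] := not_all_ex_not _ _ notF1.
have [t2 /(@imply_to_and (diagT _)) [T2 nF2]] := not_all_ex_not _ _ notF2.
have [f1 pf1 [f1F1 f1t1]] := zclosed_separating F1c T1.1 nF1.
have [f2 pf2 [f2F2 f2t2]] := zclosed_separating F2c T2.1 nF2.
(* On the line through t1 and t2, made of diagonal matrices, f1 * f2 * det vanishes
   identically although none of the three factors does. *)
pose L s := t1 + s *: (t2 - t1).
have LT s : \det (L s) != 0 -> diagT (L s).
  move=> detL; split; first by rewrite unitmxE unitfE.
  by move=> i j ij; rewrite !mxE T1.2 // T2.2 // subrr mulr0 addr0.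
have [q1 q1E] := polyfun_line t1 (t2 - t1) pf1.
have [q2 q2E] := polyfun_line t1 (t2 - t1) pf2.
have [r rE] := polyfun_line t1 (t2 - t1) (polyfun_det (@polymx_id C n)).
have : q1 * q2 * r = 0.
  apply: poly_eq0_pchar0 C0 _ => s; rewrite !hornerM -q1E -q2E -rE.
  have [->|detL] := eqVneq (\det (L s)) 0; first by rewrite mulr0.
  by case: (cover _ (LT s detL)) => [/f1F1|/f2F2] ->; rewrite !(mul0r, mulr0).
have poly_neq0 (q : {poly C}) x : q.[x] != 0 -> q != 0.
  by apply: contraNneq => ->; rewrite horner0.
apply/eqP; rewrite !mulf_eq0 !negb_or -andbA; apply/and3P; split.
- by apply: (poly_neq0 _ 0); rewrite -q1E scale0r addr0; apply/eqP.
- by apply: (poly_neq0 _ 1); rewrite -q2E scale1r addrC subrK; apply/eqP.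
- by apply: (poly_neq0 _ 0); rewrite -rE scale0r addr0 -unitfE -unitmxE; apply: T1.1.
Qed.

Lemma sum_card_fibers (T I : finType) (f : T -> I) :
  (\sum_b #|[set x | f x == b]|)%N = #|T|.
Proof.
rewrite -sum1_card (partition_big f predT) //=.
by apply: eq_bigr => b _; rewrite sum1dep_card.
Qed.

Lemma pigeonhole_fiber (T I : finType) (f : T -> I) k :
  (#|I| * k < #|T|)%N -> exists a, (k < #|[set x | f x == a]|)%N.
Proof.
move=> lt_kT; have [a|small] := pickP (fun a => k < #|[set x | f x == a]|)%N; first by exists a.
suff : (#|T| <= #|I| * k)%N by rewrite leqNgt lt_kT.
rewrite -(sum_card_fibers f) -sum_nat_const.
by apply: leq_sum => b _; rewrite leqNgt small.
Qed.

Section OnSubset.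
Variables (C : fieldType) (n : nat) (Z : 'M[C]_n -> Prop).

(* [mspan g A f]: on Z, f is a combination of the g y, y in A, with polynomial
   coefficients vanishing at 1, i.e. f lies in m (g y | y in A) for the maximal
   ideal m of the point 1. *)
Definition mspan (G : finType) (g : G -> 'M[C]_n -> C) (A : {set G}) (f : 'M[C]_n -> C) :=
  exists c : G -> 'M[C]_n -> C, (forall y, polyfun (c y) /\ c y 1%:M = 0) /\
    forall v, Z v -> f v = \sum_(y in A) c y v * g y v.

Section Nakayama.
Hypothesis Z1 : Z 1%:M.
Hypothesis Zprime : forall f g : 'M[C]_n -> C, polyfun f -> polyfun g ->
  (forall v, Z v -> f v * g v = 0) -> (forall v, Z v -> f v = 0) \/ (forall v, Z v -> g v = 0).
Variables (G : finType) (g : G -> 'M[C]_n -> C).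
Hypothesis pg : forall x, polyfun (g x).

Lemma mspan_elim (A : {set G}) x0 h : x0 \in A -> polyfun h -> h 1%:M != 0 ->
    (forall x, mspan g A (fun v => h v * g x v)) ->
  exists2 h', polyfun h' /\ h' 1%:M != 0 & forall x, mspan g (A :\ x0) (fun v => h' v * g x v).
Proof.
(* With h0 := h - c x0, the product h0 * g x0 is spanned by A :\ x0; multiplying the
   relation for g x by h0 and substituting then eliminates g x0. *)
move=> x0A ph h1 hA; have [c [pc Ec]] := hA x0.
pose h0 v := h v - c x0 v.
have ph0 : polyfun h0 by apply: polyfunB ph (pc x0).1.
have E0 v : Z v -> h0 v * g x0 v = \sum_(y in A :\ x0) c y v * g y v.
  by move=> Zv; rewrite mulrBl Ec // (big_setD1 x0) //= addrAC subrr add0r.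
exists (fun v => h0 v * h v).
  by split; [apply: polyfunM | rewrite /h0 (pc x0).2 subr0 mulf_neq0].
move=> x; have [d [pd Ed]] := hA x.
exists (fun y v => d x0 v * c y v + h0 v * d y v); split.
  move=> y; split; last by rewrite (pc y).2 (pd y).2 !mulr0 addr0.
  by apply: polyfunD; apply: polyfunM; [apply: (pd _).1 | apply: (pc _).1 | | apply: (pd _).1].
move=> v Zv; rewrite -mulrA Ed // (big_setD1 x0) //= mulrDr mulrCA E0 //.
by rewrite !mulr_sumr -big_split /=; apply: eq_bigr => y _; ring.
Qed.

Lemma mspan_vanish (A : {set G}) h : polyfun h -> h 1%:M != 0 ->
  (forall x, mspan g A (fun v => h v * g x v)) -> forall x v, Z v -> g x v = 0.
Proof.
move: {2}#|A| (erefl #|A|) => k; elim: k A h => [|k IH] A h cardA ph h1 hA x.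
  have A0 : A = set0 by apply: cards0_eq.
  have : forall v, Z v -> h v * g x v = 0.
    by have [c [_ Ec]] := hA x; move=> v Zv; rewrite Ec // A0 big_set0.
  case/(Zprime ph (pg x)) => // h0; by move/negP: h1; rewrite h0.
have [x0 x0A] : exists x0, x0 \in A by apply/set0Pn; rewrite -card_gt0 cardA.
have [h' [ph' h'1] hA'] := mspan_elim x0A ph h1 hA.
by apply: (IH (A :\ x0) h') => //; move: cardA; rewrite (cardsD1 x0) x0A => -[].
Qed.

End Nakayama.

Section IdealPowers.
Variables (I : finType) (y : I -> 'M[C]_n -> C).
Hypothesis py : forall a, polyfun (y a).

(* [jpow d f]: on Z, f lies in J^d, where J is the ideal generated by the y a. *)
Fixpoint jpow (d : nat) (f : 'M[C]_n -> C) : Prop :=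
  match d with
  | 0 => exists2 q, polyfun q & forall v, Z v -> f v = q v
  | d'.+1 => exists2 c : I -> 'M[C]_n -> C, (forall a, jpow d' (c a)) &
               forall v, Z v -> f v = \sum_a y a v * c a v
  end.

Lemma jpow_ext d f g : (forall v, Z v -> f v = g v) -> jpow d f -> jpow d g.
Proof. by case: d => [|d] fg [c pc fE]; exists c => // v Zv; rewrite -fg ?fE. Qed.

Lemma jpow0 q : polyfun q -> jpow 0 q.
Proof. by exists q. Qed.

Lemma jpow_polyM d q f : polyfun q -> jpow d f -> jpow d (fun v => q v * f v).
Proof.
elim: d f => [|d IH] f pq [c pc fE].
  by exists (fun v => q v * c v); [apply: polyfunM | move=> v Zv; rewrite fE].
exists (fun a v => q v * c a v) => [a|v Zv]; first exact: IH pq (pc a).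
by rewrite fE // mulr_sumr; apply: eq_bigr => a _; rewrite mulrCA.
Qed.

Lemma jpow_zero d : jpow d (fun _ => 0).
Proof.
elim: d => [|d IH]; first exact: jpow0 (polyfunC _ _).
by exists (fun _ _ => 0) => // v _; rewrite big1 // => a _; rewrite mulr0.
Qed.

Lemma jpowD d f g : jpow d f -> jpow d g -> jpow d (fun v => f v + g v).
Proof.
elim: d f g => [|d IH] f g [c pc fE] [c' pc' gE].
  by exists (fun v => c v + c' v); [apply: polyfunD | move=> v Zv; rewrite fE ?gE].
exists (fun a v => c a v + c' a v) => [a|v Zv]; first exact: IH (pc a) (pc' a).
by rewrite fE // gE // -big_split; apply: eq_bigr => a _; rewrite mulrDr.
Qed.

Lemma jpowB d f g : jpow d f -> jpow d g -> jpow d (fun v => f v - g v).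
Proof.
move=> jf /(jpow_polyM (polyfunC _ (-1))) jg.
by apply: jpow_ext (jpowD jf jg) => v _; rewrite mulN1r.
Qed.

Lemma jpow_sum d (J : Type) (r : seq J) (P : pred J) (F : J -> 'M[C]_n -> C) :
  (forall j, P j -> jpow d (F j)) -> jpow d (fun v => \sum_(j <- r | P j) F j v).
Proof.
move=> jF; elim: r => [|j r IH]; first by apply: jpow_ext (jpow_zero d) => v _; rewrite big_nil.
case Pj: (P j); last by apply: jpow_ext IH => v _; rewrite big_cons Pj.
by apply: jpow_ext (jpowD (jF j Pj) IH) => v _; rewrite big_cons Pj.
Qed.

Lemma jpowM d e f g : jpow d f -> jpow e g -> jpow (d + e) (fun v => f v * g v).
Proof.
elim: d f => [|d IH] f [c pc fE] jg.
  by apply: jpow_ext (jpow_polyM pc jg) => v Zv; rewrite fE.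
exists (fun a v => c a v * g v) => [a|v Zv]; first exact: IH (pc a) jg.
by rewrite fE // mulr_suml; apply: eq_bigr => a _; rewrite mulrA.
Qed.

Lemma jpow_gen a : jpow 1 (y a).
Proof.
exists (fun b _ => (b == a)%:R) => [b|v _]; first exact: jpow0 (polyfunC _ _).
by rewrite (bigD1 a) //= eqxx mulr1 big1 ?addr0 // => b /negbTE->; rewrite mulr0.
Qed.

Lemma jpow_succ d f : jpow d.+1 f -> jpow d f.
Proof.
move=> [c jc fE]; apply: jpow_ext (jpow_sum (index_enum I) (P := predT)
  (F := fun a v => y a v * c a v) (fun a _ => jpowM (jpow0 (py a)) (jc a))) => v Zv.
by rewrite fE.
Qed.

Lemma jpow_le d e f : (d <= e)%N -> jpow e f -> jpow d f.
Proof.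
move=> /subnKC <-; elim: (e - d)%N f => [|k IH] f; first by rewrite addn0.
by rewrite addnS => /jpow_succ /IH.
Qed.

Lemma jpowX k f : jpow 1 f -> jpow k (fun v => f v ^+ k).
Proof.
move=> jf; elim: k => [|k IH]; first exact: jpow0 (polyfunC _ 1).
by apply: jpow_ext (jpowM jf IH) => v _; rewrite exprS.
Qed.

Lemma jpow_prod (J : Type) (r : seq J) (P : pred J) (F : J -> 'M[C]_n -> C) (e : J -> nat) :
  (forall j, P j -> jpow (e j) (F j)) ->
  jpow (\sum_(j <- r | P j) e j) (fun v => \prod_(j <- r | P j) F j v).
Proof.
move=> jF; elim: r => [|j r IH].
  by rewrite big_nil; apply: jpow_ext (jpow0 (polyfunC _ 1)) => v _; rewrite big_nil.
case Pj: (P j); rewrite big_cons Pj; last by apply: jpow_ext IH => v _; rewrite big_cons Pj.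
by apply: jpow_ext (jpowM (jF j Pj) IH) => v _; rewrite big_cons Pj.
Qed.

Lemma jpow_subrXX k e f g : jpow 1 f -> jpow 1 g -> jpow e (fun v => f v - g v) ->
  jpow (e + k.-1) (fun v => f v ^+ k - g v ^+ k).
Proof.
move=> jf jg jfg; apply: jpow_ext (jpowM jfg (jpow_sum (index_enum 'I_k) (P := predT)
  (F := fun l v => f v ^+ (k.-1 - l) * g v ^+ l) _)) => [v _|l _]; first by rewrite subrXX.
apply: jpow_le (jpowM (jpowX _ jf) (jpowX _ jg)).
by rewrite subnK // -ltnS prednK // (leq_trans _ (ltn_ord l)).
Qed.

Definition mon d (s : {ffun 'I_d -> I}) (v : 'M[C]_n) : C := \prod_l y (s l) v.

Definition consf d (a : I) (s : {ffun 'I_d -> I}) : {ffun 'I_d.+1 -> I} :=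
  [ffun l => if unlift ord0 l is Some l' then s l' else a].

Lemma mon_cons d a (s : {ffun 'I_d -> I}) v : mon (consf a s) v = y a v * mon s v.
Proof.
rewrite /mon big_ord_recl !ffunE unlift_none; congr (_ * _).
by apply: eq_bigr => l _; rewrite ffunE liftK.
Qed.

Lemma jpow_mon_comb d f : jpow d f ->
  exists2 c : {ffun 'I_d -> I} -> 'M[C]_n -> C, (forall s, polyfun (c s)) &
    forall v, Z v -> f v = \sum_s c s v * mon s v.
Proof.
elim: d f => [|d IH] f.
  move=> [q pq fE]; exists (fun _ => q) => // v Zv.
  rewrite fE // (big_pred1 (ffun0 (card_ord 0))).
    by rewrite /mon big_ord0 mulr1.
  by move=> s; symmetry; apply/eqP/ffunP => -[].
move=> [c /(fun jc a => IH _ (jc a)) combc fE].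
have [cc pcc ccE] := fin_all_exists2 combc.
exists (fun t v => \sum_(x : I * {ffun 'I_d -> I} | consf x.1 x.2 == t) cc x.1 x.2 v).
  by move=> t; apply: polyfun_sum => x _; apply: pcc.
move=> v Zv; rewrite fE //.
under eq_bigr => a _ do rewrite ccE // mulr_sumr.
rewrite pair_big /= (partition_big (fun x : I * {ffun 'I_d -> I} => consf x.1 x.2) predT) //=.
apply: eq_bigr => t _; rewrite mulr_suml; apply: eq_bigr => x /eqP <-.
by rewrite mon_cons mulrCA.
Qed.

Hypothesis y1 : forall a, y a 1%:M = 0.

Lemma jpow_mspan K f : jpow K.+1 f -> mspan (@mon K) [set: {ffun 'I_K -> I}] f.
Proof.
move=> [c /(fun jc a => jpow_mon_comb (jc a)) combc fE].
have [cc pcc ccE] := fin_all_exists2 combc.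
exists (fun s v => \sum_a y a v * cc a s v); split.
  move=> s; split; last by rewrite big1 // => a _; rewrite y1 mul0r.
  by apply: polyfun_sum => a _; apply: polyfunM; [apply: py | apply: pcc].
move=> v Zv; rewrite fE //.
under eq_bigr => a _ do rewrite ccE // mulr_sumr.
rewrite exchange_big /= [RHS]big_mkcond /=; apply: eq_bigr => s _.
by rewrite inE mulr_suml; apply: eq_bigr => a _; rewrite mulrA.
Qed.

Lemma mon_count K (s : {ffun 'I_K -> I}) v :
  mon s v = \prod_b y b v ^+ #|[set l | s l == b]|.
Proof.
rewrite /mon (partition_big s predT) //=; apply: eq_bigr => b _.
by rewrite -prodr_const; apply: eq_big => [l|l /eqP ->]; rewrite ?inE.
Qed.

Lemma jpow_mul_mon K (s : {ffun 'I_K -> I}) (u : I -> 'M[C]_n -> C) k a :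
  (forall b, polyfun (u b)) -> (k <= #|[set l | s l == a]|)%N ->
  jpow k.+1 (fun v => u a v * y a v ^+ k) ->
  jpow K.+1 (fun v => (\prod_b u b v) * mon s v).
Proof.
move=> pu le_k_a jua; pose cnt b := #|[set l | s l == b]|.
have sum_cnt := sum_card_fibers s; rewrite card_ord (bigD1 a) //= in sum_cnt.
have jrest := jpow_prod (index_enum I) (P := fun b => b != a) (e := cnt)
  (F := fun b v => y b v ^+ cnt b) (fun b _ => jpowX (cnt b) (jpow_gen b)).
have := jpow_polyM (polyfun_prod (index_enum I) (P := fun b => b != a) (fun b _ => pu b))
  (jpowM (jpowM jua (jpowX (cnt a - k) (jpow_gen a))) jrest).
rewrite addSn subnKC // addSn sum_cnt; apply: jpow_ext => v _.
rewrite mon_count [\prod_b u b v](bigD1 a) //= [\prod_b _ ^+ _](bigD1 a) //=.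
by rewrite -[_ * y a v ^+ (_ - k)]mulrA -exprD subnKC //; ring.
Qed.

End IdealPowers.

End OnSubset.

Lemma zirreducible_prime (C : fieldType) (n : nat) (Z : 'M[C]_n -> Prop) :
  zirreducible Z -> forall f g : 'M[C]_n -> C, polyfun f -> polyfun g ->
  (forall v, Z v -> f v * g v = 0) -> (forall v, Z v -> f v = 0) \/ (forall v, Z v -> g v = 0).
Proof.
move=> [ZGL [_ Zirr]] f g pf pg fg0.
have zero_set (h : 'M[C]_n -> C) : polyfun h -> zclosed (fun v => inGL v /\ h v = 0).
  move=> [q qE]; exists (fun r => r = q) => v; rewrite qE.
  split=> -[vGL hv]; split=> //; first by move=> r ->.
  exact: hv.
have [] := Zirr _ _ (zero_set f pf) (zero_set g pg).
- move=> v Zv; have /eqP := fg0 v Zv; rewrite mulf_eq0 => /orP[] /eqP hv0.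
    by left; split=> //; apply: ZGL.
  by right; split=> //; apply: ZGL.
- by move=> fZ; left=> v /fZ[].
- by move=> gZ; right=> v /gZ[].
Qed.

Section OffDiagonal.
Variables (C : fieldType) (n p : nat).

Definition offdiag := {a : 'I_n * 'I_n | a.1 != a.2}.

Definition offd (a : offdiag) (v : 'M[C]_n) : C := v (val a).1 (val a).2.

Definition sq_rest (i j : 'I_n) (v : 'M[C]_n) : C :=
  \sum_(k | (k != i) && (k != j)) v i k * v k j.

Definition frob_defect (i j : 'I_n) (v : 'M[C]_n) : C :=
  (v i i + v j j) ^+ p - v i i ^+ p - v j j ^+ p.

Definition frob_rhs (i j : 'I_n) (v : 'M[C]_n) : C :=
  sq_rest i j (epow p v) -
  ((v i j * (v i i + v j j) + sq_rest i j v) ^+ p - (v i j * (v i i + v j j)) ^+ p).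

Lemma polyfun_frob_defect (i j : 'I_n) : polyfun (frob_defect i j).
Proof.
have pe (k : 'I_n) := @polyfun_entry C n k k.
by apply: polyfunB; [apply: polyfunB|]; apply: polyfunX => //; apply: polyfunD.
Qed.

Lemma frob_defect1 (i j : 'I_n) : [pchar C] =i pred0 -> (2 <= p)%N ->
  frob_defect i j 1%:M != 0.
Proof.
move=> C0 p_ge2; rewrite /frob_defect !mxE !eqxx expr1n.
have two_lt : (2 < 2 ^ p)%N by rewrite -{1}(expn1 2) ltn_exp2l.
rewrite -addrA -opprD -[1 + 1 : C]/(2%:R) -natrX -natrB 1?ltnW //.
by rewrite (pcharf0P C).1 // subn_eq0 -ltnNge.
Qed.

Lemma frob_defect_identity (i j : 'I_n) (v : 'M[C]_n) : i != j ->
  epow p (v ^+ 2) = epow p v ^+ 2 -> frob_defect i j v * v i j ^+ p = frob_rhs i j v.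
Proof.
move=> ij; have sqE (w : 'M[C]_n) :
    (w ^+ 2) i j = w i i * w i j + (w i j * w j j + sq_rest i j w).
  by rewrite expr2 -mulmxE mxE (bigD1 i) //= (bigD1 j) 1?eq_sym.
move=> /matrixP /(_ i j); rewrite mxE !sqE !mxE => e.
rewrite /frob_rhs /frob_defect.
have -> : v i j * (v i i + v j j) + sq_rest i j v =
          v i i * v i j + (v i j * v j j + sq_rest i j v) by ring.
by rewrite e !exprMn; ring.
Qed.

Section Jpow.
Variable Z : 'M[C]_n -> Prop.

Lemma polyfun_offd a : polyfun (offd a).
Proof. exact: polyfun_entry. Qed.

Lemma jpow_entry (i j : 'I_n) : i != j -> jpow Z offd 1 (fun v => v i j).
Proof. by move=> ij; apply: (jpow_gen Z offd (exist _ (i, j) ij)). Qed.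

Lemma jpow_frob_rhs (i j : 'I_n) : (0 < p)%N -> i != j -> jpow Z offd p.+1 (frob_rhs i j).
Proof.
move=> p_gt0 ij.
have jR : jpow Z offd 2 (sq_rest i j).
  apply: jpow_sum => k /andP[ki kj].
  by apply: (jpowM (d := 1) (e := 1)); apply: jpow_entry; rewrite // eq_sym.
have jQ : jpow Z offd p.+1 (fun v => sq_rest i j (epow p v)).
  apply: jpow_sum => k /andP[ki kj]; have ik : i != k by rewrite eq_sym.
  have jk := jpowM (jpowX p (jpow_entry ik)) (jpowX p (jpow_entry kj)).
  apply: jpow_ext (jpow_le polyfun_offd _ jk) => [v _|]; first by rewrite !mxE.
  by rewrite -addn1 leq_add2l.
pose x (v : 'M[C]_n) := v i j * (v i i + v j j).
have jX : jpow Z offd 1 x.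
  have pd := polyfunD (@polyfun_entry C n i i) (@polyfun_entry C n j j).
  by apply: jpow_ext (jpow_polyM pd (jpow_entry ij)) => v _; rewrite mulrC.
have jXR : jpow Z offd 1 (fun v => x v + sq_rest i j v).
  exact: jpowD jX (jpow_le polyfun_offd (isT : (1 <= 2)%N) jR).
have jR' : jpow Z offd 2 (fun v => (x v + sq_rest i j v) - x v).
  by apply: jpow_ext jR => v _; rewrite addrAC subrr add0r.
have := jpow_subrXX polyfun_offd p jXR jX jR'; rewrite add2n prednK // => jD.
exact: jpow_ext (jpowB jQ jD).
Qed.

End Jpow.

Lemma zirreducible_offdiag_eq0 (Z : 'M[C]_n -> Prop) :
  [pchar C] =i pred0 -> (2 <= p)%N -> zirreducible Z ->
  (forall v, Z v -> epow p (v ^+ 2) = epow p v ^+ 2) -> Z 1%:M ->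
  forall v, Z v -> forall i j, i != j -> v i j = 0.
Proof.
move=> C0 p_ge2 Zirr Zsq Z1; have p_gt0 : (0 < p)%N by apply: ltnW.
pose u (a : offdiag) := frob_defect (val a).1 (val a).2.
have pu a : polyfun (u a) by apply: polyfun_frob_defect.
pose U v := \prod_a u a v.
have pU : polyfun U by apply: polyfun_prod => a _.
have U1 : U 1%:M != 0 by apply/prodf_neq0 => a _; apply: frob_defect1.
pose K := (#|{: offdiag}| * p.-1).+1.
have span (s : {ffun 'I_K -> offdiag}) :
    mspan Z (mon offd (d := K)) setT (fun v => U v * mon offd s v).
  apply: (jpow_mspan polyfun_offd) => [a|]; first by rewrite /offd mxE (negbTE (valP a)).
  have [a] : exists a, (p.-1 < #|[set l | s l == a]|)%N.
    by apply: pigeonhole_fiber; rewrite card_ord.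
  rewrite prednK // => le_pa.
  apply: (jpow_mul_mon (a := a) pu le_pa).
  apply: jpow_ext (jpow_frob_rhs Z p_gt0 (valP a)) => v Zv.
  by rewrite -frob_defect_identity ?(valP a) ?Zsq.
have pmon s : polyfun (mon offd (d := K) s) by apply: polyfun_prod => l _; apply: polyfun_offd.
have vanish := mspan_vanish Z1 (zirreducible_prime Zirr) pmon pU U1 span.
move=> v Zv i j ij; have := vanish [ffun _ => exist _ (i, j) ij] v Zv.
rewrite /mon (eq_bigr (fun _ => v i j)) ?prodr_const => [/eqP|l _]; last by rewrite ffunE.
by rewrite expf_eq0 => /andP[_ /eqP].
Qed.

End OffDiagonal.

Theorem lemma3p13 (C : closedFieldType) (n p : nat) :
  uncountable C -> [pchar C] =i pred0 -> (2 <= p)%N ->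
  zclosed (Xset (C := C) (n := n) p) /\
  irr_component (Xset (C := C) (n := n) p) (@diagT C n) /\
  (forall Y : 'M[C]_n -> Prop,
     irr_component (Xset (C := C) (n := n) p) Y -> Y 1%:M -> Y = @diagT C n).
Proof.
move=> _ C0 p_ge2; have p_gt0 : (0 < p)%N by apply: ltnW.
have Tirr := @diagT_zirreducible C n C0.
have TX (v : 'M[C]_n) : diagT v -> Xset p v by apply: diagT_Xset.
have sub_diagT (Z : 'M[C]_n -> Prop) :
    zirreducible Z -> (forall v, Z v -> Xset p v) -> Z 1%:M -> forall v, Z v -> diagT v.
  move=> Zirr ZX Z1 v Zv; split=> [|i j]; first exact: Zirr.1 v Zv.
  by apply: (zirreducible_offdiag_eq0 C0 p_ge2 Zirr _ Z1 Zv) => w /ZX[_ /(_ 2%N) []].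
split; first exact: Xset_zclosed.
split=> [|Y [Yirr [YX Ymax]] Y1].
  by split=> //; split=> // Z Zirr ZX TZ; apply: sub_diagT => //; apply/TZ/diagT1.
apply: functional_extensionality => v; apply: propositional_extensionality.
by split; [apply: sub_diagT | apply: Ymax _ Tirr TX (sub_diagT _ Yirr YX Y1) v].
Qed.
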